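(* Let $g\ge 2$ and let $C$ be a stable curve of compact type of genus $g$ with irreducible components $X_1,\dots,X_\gamma$, and let $X^{pr}$ be the principal component of $C$. Let $\underline e_1$ be the multidegree with $(e_1)_{X^{pr}}=1$ and $(e_1)_X=0$ for every irreducible component $X\ne X^{pr}$. Then: (i) $\underline e_1$ is the unique $X^{pr}$-quasistable multidegree of total degree $1$ on $C$; equivalently $J^{1,X^{pr}}_C=J^{\underline e_1}_C$; (ii) for every $q\in C$ the line bundle $\alpha^1_C(q)$ has multidegree $\underline e_1$, i.e. $\alpha^1_C$ factors through $J^{\underline e_1}_C\subset J^{1,ss}_C$.
   Context: All curves are connected, projective, reduced, nodal, over an algebraically closed field. $g_C=1-\chi(\mathcal O_C)$. Subcurve: union of irreducible components; $Y'$ is the closure of the complement of $Y$, $k_Y=\#(Y\cap Y')$. A tail is a subcurve $Z$ with $k_Z=1$. Compact type: every node is separating (the intersection of two tails $Z,Z'$, $Z\cap Z'=\{n\}$). Stable: every smooth rational component meets the rest in at least 3 points. For a line bundle $L$ on $C$ with components $X_1,\dots,X_\gamma$, its multidegree is $\underline d=(\deg L|_{X_1},\dots,\deg L|_{X_\gamma})$, total degree $d=\sum d_i$, and $d_Y:=\sum_{X_i\subseteq Y}d_i$. $J^{\underline d}_C$ is the locus of line bundles of multidegree $\underline d$; for $C$ of compact type, restriction gives $J^{\underline d}_C\cong\prod_i J^{d_i}_{X_i}$. $\omega_C$ is the dualizing sheaf, $\deg\omega_C|_Y=2g_Y-2+k_Y$. A multidegree $\underline d$ of total degree $d$ on $C$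 of genus $g\ge2$ is semistable if for every non-empty proper subcurve $Y$: $\left|d_Y-\frac{d}{2g-2}\deg\omega_C|_Y\right|\le \frac{k_Y}{2}$; for an irreducible component $X$, it is $X$-quasistable if it is semistable and moreover $d_Y-\frac{d}{2g-2}\deg\omega_C|_Y>-\frac{k_Y}{2}$ for every proper subcurve $Y\supseteq X$. $J^{1,ss}_C$ (resp. $J^{1,X}_C$) is the union of $J^{\underline d}_C$ over semistable (resp. $X$-quasistable) $\underline d$ of total degree 1. Central/semicentral: a component $X$ is central (resp. semicentral) if each connected component $Z$ of $X'$ has $g_Z<g_C/2$ (resp. $\le g_C/2$). A stable curve of compact type has either exactly one central component, or (exactly when some node is the intersection of two tails of genus $g/2$) no central component and exactly two semicentral ones, which meet. The principal component $X^{pr}$ is the central component in the first case, and a fixed choice of one of the two semicentral components in the second. A tail $Z$ is small if $g_Z<g_C/2$, or $g_Z=g_C/2$ and $X^{pr}\subseteq Z'$. For a tail $Z$ of a compact-type curve with $Z\cap Z'=\{n\}$, $\mathcal O_C(Z)$ is the line bundle with $\mathcal O_C(Z)|_Z\cong\mathcal O_Z(-n)$ and $\mathcal O_C(Z)|_{Z'}\cong\mathcal O_{Z'}(n)$ (equivalently $\mathcal O_{\mathcal C}(Z)|_C$ for any smoothing $\mathcal C$ of $C$). For $q\in C$, let $\mathcal N_q=\mathcal O_C(q)$ if $q$ is a smooth point, and if $q$ is a node with small tail $Z$ at $q$, let $\mathcal N_q$ be the line bundle with $\mathcal N_q|_Z=\mathcal O_Z(q)$, $\mathcal N_q|_{Z'}=\mathcal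 O_{Z'}$. The first Abel map of $C$ is $\alpha^1_C(q):=\mathcal N_q\otimes\bigotimes_{Z\text{ small tail},\,q\in Z}\mathcal O_C(Z)$. *)

(* Combinatorial model of a stable curve of compact type:
   components = 'I_n, dual graph = e (simple graph), geometric genera = gen. *)
From HB Require Import structures.
From mathcomp Require Import all_boot all_order all_algebra.
Set Implicit Arguments. Unset Strict Implicit. Unset Printing Implicit Defensive.
Import Order.TTheory GRing.Theory Num.Theory.
Local Open Scope ring_scope.

Section Curves.
Variables (n : nat) (e : rel 'I_n) (gen : 'I_n -> nat).

(* dual graph of a curve with no self-nodes and at most one node between two components *)
Definition simple_graph : Prop := symmetric e /\ irreflexive e.

Definition induced (Y : {set 'I_n}) : rel 'I_n :=
  fun i j => [&& e i j, i \in Y & j \in Y].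

Definition connectedb (Y : {set 'I_n}) : bool :=
  [forall i in Y, forall j in Y, connect (induced Y) i j].

Definition remove_edge (a b : 'I_n) : rel 'I_n :=
  fun i j => e i j && ~~ (((i == a) && (j == b)) || ((i == b) && (j == a))).

(* C connected and every node separating *)
Definition compact_type : Prop :=
  connectedb setT /\ forall a b, e a b -> ~~ connect (remove_edge a b) a b.

Definition nedges_in (Y : {set 'I_n}) : nat :=
  #|[set p : 'I_n * 'I_n | [&& (val p.1 < val p.2)%N, e p.1 p.2, p.1 \in Y & p.2 \in Y]]|.

Definition kY (Y : {set 'I_n}) : nat :=
  #|[set p : 'I_n * 'I_n | [&& e p.1 p.2, p.1 \in Y & p.2 \notin Y]]|.

(* g_Y = 1 - chi(O_Y) = sum g_i - #components + #internal nodes + 1 *)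
Definition genusY (Y : {set 'I_n}) : int :=
  (\sum_(i in Y) (gen i)%:Z) - (#|Y|)%:Z + (nedges_in Y)%:Z + 1.

Definition genusC : int := genusY setT.

Definition degomega (Y : {set 'I_n}) : int := 2 * genusY Y - 2 + (kY Y)%:Z.

Definition stable : Prop :=
  forall i, gen i = 0%N -> (3 <= #|[set j | e i j]|)%N.

Definition multideg := 'I_n -> int.

Definition degY (d : multideg) (Y : {set 'I_n}) : int := \sum_(i in Y) d i.
Definition totdeg (d : multideg) : int := degY d setT.

Definition slope (d : multideg) : rat :=
  ((totdeg d)%:~R : rat) / ((2 * genusC - 2)%:~R : rat).

Definition semistable (d : multideg) : Prop :=
  forall Y : {set 'I_n}, Y != set0 -> Y != setT ->
    `|((degY d Y)%:~R : rat) - slope d * ((degomega Y)%:~R : rat)|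
      <= ((kY Y)%:~R : rat) / 2.

Definition quasistable (X : 'I_n) (d : multideg) : Prop :=
  semistable d /\
  forall Y : {set 'I_n}, X \in Y -> Y != setT ->
    ((degY d Y)%:~R : rat) - slope d * ((degomega Y)%:~R : rat)
      > - (((kY Y)%:~R : rat) / 2).

Definition conn_component_of (Y Z : {set 'I_n}) : bool :=
  [&& Z \subset Y, Z != set0, connectedb Z &
      [forall i in Z, forall j in Y :\: Z, ~~ e i j]].

Definition central (X : 'I_n) : Prop :=
  forall Z, conn_component_of (~: [set X]) Z -> 2 * genusY Z < genusC.

Definition semicentral (X : 'I_n) : Prop :=
  forall Z, conn_component_of (~: [set X]) Z -> 2 * genusY Z <= genusC.

(* X is (a legitimate choice of) the principal component *)
Definition principal (X : 'I_n) : Prop :=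
  central X \/ ((forall Y, ~ central Y) /\ semicentral X).

Definition tail (Z : {set 'I_n}) : bool := kY Z == 1%N.

Definition small_tail (Xpr : 'I_n) (Z : {set 'I_n}) : bool :=
  tail Z && ((2 * genusY Z < genusC) || ((2 * genusY Z == genusC) && (Xpr \notin Z))).

(* multidegree of O_C(Z): -#(X ∩ Z') on X ⊆ Z, #(X ∩ Z) on X ⊆ Z' *)
Definition mdeg_OZ (Z : {set 'I_n}) : multideg := fun k =>
  if k \in Z then - (#|[set j | e k j & j \notin Z]|)%:Z
  else (#|[set j | e k j & j \in Z]|)%:Z.

Definition e1 (Xpr : 'I_n) : multideg := fun k => if k == Xpr then 1 else 0.

(* multidegree of alpha^1_C(q), q a smooth point of the component i *)
Definition mdeg_alpha_smooth (Xpr i : 'I_n) : multideg := fun k =>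
  (if k == i then 1 else 0) +
  \sum_(Z : {set 'I_n} | small_tail Xpr Z && (i \in Z)) mdeg_OZ Z k.

(* multidegree of alpha^1_C(q), q the node joining components a and b,
   Z0 the small tail at q *)
Definition mdeg_alpha_node (Xpr a b : 'I_n) (Z0 : {set 'I_n}) : multideg := fun k =>
  (if (k \in Z0) && ((k == a) || (k == b)) then 1 else 0) +
  \sum_(Z : {set 'I_n} | small_tail Xpr Z && ((a \in Z) || (b \in Z))) mdeg_OZ Z k.

End Curves.

(* The curve is encoded by its dual graph, which for compact type is a tree.
   The proof rests on two observations.
   - Tails are branches of the tree: removing a node {a,b} separates the
     components reachable from a from those reachable from b; the tails are
     exactly these branches, indexed by their oriented node.
   - Canonical degrees are additive: deg omega_C|_Y is the sum over v in Y of
     the weights 2 g_v - 2 + val v, nonnegative by stability.  For total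
     degree 1 the semistability condition therefore compares d_Y with the
     share w_Y / w_C of the canonical degree, and principality of r says
     that every tail avoiding r has share at most 1/2; so the small tails are
     the tails avoiding r.
   Part (i) follows: e1 deviates from the shares by at most k_Y / 2, and a
   quasistable d has degree 0 on every tail avoiding r, hence vanishes off r
   by splitting C along the branches at each other component.  Part (ii) is a
   counting argument over the branches at each component k. *)

From HB Require Import structures.
From mathcomp Require Import all_boot all_order all_algebra zify lra.
Set Implicit Arguments. Unset Strict Implicit. Unset Printing Implicit Defensive.
Import Order.TTheory GRing.Theory Num.Theory.
Local Open Scope ring_scope.

Lemma connect_closed (T : finType) (r : rel T) (P : pred T) x y :
  (forall a b, r a b -> P a -> P b) -> P x -> connect r x y -> P y.
Proof.
move=> clP Px /connectP [p pth ->]; elim: p x Px pth => //= z p IHp x Px.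
by case/andP=> rxz pth; apply: IHp (clP _ _ rxz Px) pth.
Qed.

Lemma connect_restrict (T : finType) (r : rel T) (P : pred T) x y :
  (forall a b, r a b -> P a -> P b) -> P x -> connect r x y ->
  connect (fun a b => [&& r a b, P a & P b]) x y.
Proof.
move=> clP Px /connectP [p pth ->]; elim: p x Px pth => /= [|z p IHp] x Px.
  by rewrite connect0.
case/andP=> rxz pth; apply: (connect_trans (y:=z)); last exact: IHp (clP _ _ rxz Px) pth.
by apply: connect1; rewrite rxz Px (clP _ _ rxz Px).
Qed.

Lemma card_le1 (T : finType) (X : {set T}) x0 :
  (forall x, x \in X -> x = x0) -> #|X| = (x0 \in X).
Proof.
move=> allx0; case x0X: (x0 \in X).
  suff -> : X = [set x0] by rewrite cards1.
  by apply/setP => x; rewrite inE; apply/idP/eqP => [/allx0 | ->].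
apply/eqP; rewrite cards_eq0; apply/eqP/setP => x; rewrite inE.
by apply/negbTE/negP => xX; move: x0X; rewrite -(allx0 x xX) xX.
Qed.

Lemma card_pairs n (P : 'I_n -> 'I_n -> bool) :
  #|[set p : 'I_n * 'I_n | P p.1 p.2]| = (\sum_i \sum_j (P i j : nat))%N.
Proof.
rewrite -sum1_card (eq_bigl (fun p => P p.1 p.2)) => [|p]; last by rewrite inE.
rewrite -(pair_big_dep xpredT (fun i j => P i j) (fun _ _ => 1%N)).
by apply: eq_bigr => i _; rewrite big_mkcond /=; apply: eq_bigr => j _; case: (P i j).
Qed.

Lemma sum_delta (T : finType) (P : pred T) (k : T) :
  \sum_(j | P j) ((k == j) : nat)%:Z = (P k : nat)%:Z.
Proof.
rewrite big_mkcond (bigD1 k) //= eqxx big1 ?addr0 => [|j jk]; first by case: (P k).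
by rewrite eq_sym (negbTE jk); case: (P j).
Qed.

Lemma sum_endpoints (T : finType) (R : rel T) (k : T) :
  \sum_(p : T * T | R p.1 p.2) (((k == p.2) : nat)%:Z - ((k == p.1) : nat)%:Z)
  = \sum_a (R a k : nat)%:Z - \sum_b (R k b : nat)%:Z.
Proof.
have split2 (F : T -> T -> int) :
    \sum_(p : T * T | R p.1 p.2) F p.1 p.2 = \sum_a \sum_(b | R a b) F a b.
  by rewrite pair_big_dep.
rewrite sumrB (split2 (fun _ b => ((k == b) : nat)%:Z)).
rewrite (split2 (fun a _ => ((k == a) : nat)%:Z)).
congr (_ - _); first by apply: eq_bigr => a _; rewrite sum_delta.
under eq_bigr do rewrite big_mkcond.
rewrite exchange_big /=; apply: eq_bigr => b _; rewrite -big_mkcond /=.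
exact: (sum_delta (R^~ b)).
Qed.

Section TreeBranches.
Variables (n : nat) (e : rel 'I_n).
Hypothesis esym : symmetric e.
Hypothesis eirr : irreflexive e.
Hypothesis econn : connectedb e setT.
Hypothesis ebridge : forall a b, e a b -> ~~ connect (remove_edge e a b) a b.

Definition boundary (Z : {set 'I_n}) : {set 'I_n * 'I_n} :=
  [set p | [&& e p.1 p.2, p.1 \in Z & p.2 \notin Z]].

Lemma kY_boundary (Z : {set 'I_n}) : kY e Z = #|boundary Z|.
Proof. by []. Qed.

Lemma closed_full (Z : {set 'I_n}) x0 :
  (forall x y, e x y -> x \in Z -> y \in Z) -> x0 \in Z -> forall y, y \in Z.
Proof.
move=> clZ x0Z y; move/forallP/(_ x0): econn; rewrite in_setT => /forallP/(_ y).
rewrite in_setT; apply: connect_closed x0Z => a b /and3P [eab _ _]; exact: clZ.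
Qed.

Lemma kY_pos (Y : {set 'I_n}) : Y != set0 -> Y != setT -> (0 < kY e Y)%N.
Proof.
move=> /set0Pn [x xY] YT; rewrite kY_boundary card_gt0; apply: contraNneq YT => bY0.
apply/eqP/setP => y; rewrite in_setT; apply: (closed_full _ xY) => a b eab aY.
apply/negPn/negP => bY.
by have := in_set0 (a, b); rewrite -bY0 inE /= eab aY bY.
Qed.

Definition branch (a b : 'I_n) : {set 'I_n} :=
  locked [set u | connect (remove_edge e a b) a u].

Lemma in_branch a b u : (u \in branch a b) = connect (remove_edge e a b) a u.
Proof. by rewrite /branch -lock inE. Qed.

Lemma branch_root a b : a \in branch a b.
Proof. by rewrite in_branch connect0. Qed.

Lemma branch_notin a b : e a b -> b \notin branch a b.
Proof. by move=> eab; rewrite in_branch ebridge. Qed.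

Lemma branch_step a b x y : x \in branch a b -> e x y ->
  ~~ (((x == a) && (y == b)) || ((x == b) && (y == a))) -> y \in branch a b.
Proof.
rewrite !in_branch => ax exy not_ab; apply: connect_trans ax _; apply: connect1.
by rewrite /remove_edge exy not_ab.
Qed.

Lemma branch_exit a b x y : x \in branch a b -> e x y -> y \notin branch a b ->
  x = a /\ y = b.
Proof.
move=> xB exy yB.
have : ((x == a) && (y == b)) || ((x == b) && (y == a)).
  by apply: contraR yB; apply: branch_step.
case/orP=> /andP [/eqP xa /eqP yb] //.
have eab : e a b by rewrite esym -xa -yb.
by move: xB; rewrite xa (negbTE (branch_notin eab)).
Qed.

Lemma branch_unique a b (Z : {set 'I_n}) : a \in Z -> b \notin Z ->
  (forall x y, x \in Z -> e x y -> y \notin Z -> x = a /\ y = b) ->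
  Z = branch a b.
Proof.
move=> aZ bZ exitZ; apply/setP => u; apply/idP/idP => [uZ|]; last first.
  rewrite in_branch; apply: connect_closed aZ => x y /andP [exy not_ab] xZ.
  apply: contraTT not_ab => yZ; by have [-> ->] := exitZ x y xZ exy yZ; rewrite !eqxx.
pose U := branch a b :|: ~: Z.
have clU : forall x y, e x y -> x \in U -> y \in U.
  move=> x y exy; rewrite !in_setU !in_setC => /orP [xB | xZ].
    case yB: (y \in branch a b) => //=.
    by have [_ ->] := branch_exit xB exy (negbT yB).
  case yZ: (y \in Z); rewrite ?orbT //=.
  have eyx : e y x by rewrite esym.
  by have [-> _] := exitZ y x yZ eyx xZ; rewrite branch_root.
have aU : a \in U by rewrite in_setU branch_root.
by have := closed_full clU aU u; rewrite in_setU in_setC uZ orbF.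
Qed.

Lemma branchC a b : e a b -> ~: branch a b = branch b a.
Proof.
move=> eab; apply: branch_unique.
- by rewrite in_setC branch_notin.
- by rewrite in_setC negbK branch_root.
move=> x y; rewrite !in_setC negbK => xB exy yB.
have eyx : e y x by rewrite esym.
by have [-> ->] := branch_exit yB eyx xB.
Qed.

Lemma boundary_branch a b : e a b -> boundary (branch a b) = [set (a, b)].
Proof.
move=> eab; apply/setP => -[x y]; rewrite !inE /=; apply/idP/idP.
  by case/and3P => exy xB yB; have [-> ->] := branch_exit xB exy yB.
by case/eqP => -> ->; rewrite eab branch_root branch_notin.
Qed.

Lemma kY_compl (Y : {set 'I_n}) : kY e (~: Y) = kY e Y.
Proof.
rewrite /kY (card_pairs (fun i j => [&& e i j, i \in ~: Y & j \notin ~: Y])).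
rewrite (card_pairs (fun i j => [&& e i j, i \in Y & j \notin Y])) exchange_big /=.
apply: eq_bigr => i _; apply: eq_bigr => j _.
by rewrite !inE negbK esym [(j \notin Y) && _]andbC.
Qed.

Lemma kY_branch a b : e a b -> kY e (branch a b) = 1%N.
Proof. by move=> eab; rewrite kY_boundary boundary_branch // cards1. Qed.

Lemma tail_branch (Z : {set 'I_n}) : kY e Z = 1%N ->
  exists a b, [/\ e a b, boundary Z = [set (a, b)] & Z = branch a b].
Proof.
rewrite kY_boundary => /eqP /cards1P [[a b] bdZ].
have : (a, b) \in boundary Z by rewrite bdZ set11.
rewrite inE /= => /and3P [eab aZ bZ].
exists a, b; split => //; apply: branch_unique => // x y xZ exy yZ.
have : (x, y) \in boundary Z by rewrite inE /= exy xZ yZ.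
by rewrite bdZ inE => /eqP [-> ->].
Qed.

Lemma tail_at_node (Z : {set 'I_n}) x y : kY e Z = 1%N ->
  x \in Z -> e x y -> y \notin Z -> Z = branch x y.
Proof.
move=> /tail_branch [a [b [_ _ ->]]] xB exy yB.
by have [-> ->] := branch_exit xB exy yB.
Qed.

Lemma branches_disjoint u c c' : e c u -> e c' u -> c != c' ->
  forall x, x \in branch c u -> x \notin branch c' u.
Proof.
move=> ecu ec'u cc' x xB; apply/negP => xB'.
(* c' lies on the u-side of the node {c,u}, reached through {u,c'}. *)
have c'Bc : c' \notin branch c u.
  have uc : u != c by apply: contraTneq ecu => ->; rewrite eirr.
  rewrite -in_setC branchC //; apply: branch_step (branch_root u c) _ _.
    by rewrite esym.
  by rewrite eqxx (negbTE uc) [c' == c]eq_sym (negbTE cc').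
pose W := branch c' u :&: branch c u.
have clW : forall y z, e y z -> y \in W -> z \in W.
  move=> y z eyz; rewrite !in_setI => /andP [yB' yB].
  have zB' : z \in branch c' u.
    apply/negPn/negP => zB'; have [yc' _] := branch_exit yB' eyz zB'.
    by move: c'Bc; rewrite -yc' yB.
  rewrite zB' /=; apply/negPn/negP => zB; have [_ zu] := branch_exit yB eyz zB.
  by move: zB'; rewrite zu (negbTE (branch_notin ec'u)).
have xW : x \in W by rewrite in_setI xB xB'.
by have := closed_full clW xW u; rewrite in_setI (negbTE (branch_notin ec'u)).
Qed.

Lemma branches_cover u x : x != u -> exists2 c, e u c & x \in branch c u.
Proof.
move=> xu; pose U := u |: [set y | [exists c, e u c && (y \in branch c u)]].
have clU : forall y z, e y z -> y \in U -> z \in U.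
  move=> y z eyz; rewrite !inE => /orP [/eqP yu | /existsP [c /andP [euc yB]]].
    by apply/orP; right; apply/existsP; exists z; rewrite -yu eyz branch_root.
  case zB: (z \in branch c u).
    by apply/orP; right; apply/existsP; exists c; rewrite euc zB.
  by have [_ ->] := branch_exit yB eyz (negbT zB); rewrite eqxx.
have uU : u \in U by rewrite !inE eqxx.
have := closed_full clU uU x; rewrite !inE (negbTE xu) /=.
by case/existsP=> c /andP [euc xB]; exists c.
Qed.

Lemma sum_branches (V : nmodType) u (F : 'I_n -> V) :
  \sum_x F x = F u + \sum_(c | e u c) \sum_(x in branch c u) F x.
Proof.
rewrite (bigD1 u) //=; congr (_ + _).
under [RHS]eq_bigr do rewrite big_mkcond.
rewrite exchange_big /= [LHS]big_mkcond /=; apply: eq_bigr => x _.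
case: eqVneq => [-> | xu] /=.
  by rewrite big1 // => c euc; rewrite (negbTE (branch_notin _)) // esym.
have [c0 euc0 xB] := branches_cover xu.
rewrite (bigD1 c0) //= xB big1 ?addr0 // => c /andP [euc cc0].
by rewrite (negbTE (branches_disjoint _ _ _ xB)) // 1?esym // eq_sym.
Qed.

Lemma branch_component u c : e u c -> conn_component_of e (~: [set u]) (branch c u).
Proof.
move=> euc; have ecu : e c u by rewrite esym.
have reach x : x \in branch c u -> connect (induced e (branch c u)) c x.
  rewrite in_branch => cx.
  have clB a b : remove_edge e c u a b -> a \in branch c u -> b \in branch c u.
    by rewrite !in_branch => rab ca; apply: connect_trans ca (connect1 rab).
  apply: connect_sub (connect_restrict clB (branch_root c u) cx).
  move=> a b /and3P [/andP [eab _] aB bB]; apply: connect1.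
  by rewrite /induced eab aB bB.
have symB : connect_sym (induced e (branch c u)).
  apply: sym_connect_sym => a b; rewrite /induced esym.
  by case: (a \in _); case: (b \in _); rewrite ?andbF ?andbT.
apply/and4P; split.
- apply/subsetP => x xB; rewrite !inE; apply: contraTneq xB => ->.
  exact: branch_notin.
- by apply/set0Pn; exists c; apply: branch_root.
- apply/forallP => i; apply/implyP => iB; apply/forallP => j; apply/implyP => jB.
  by apply: connect_trans (reach j jB); rewrite symB; apply: reach.
- apply/forallP => i; apply/implyP => iB; apply/forallP => j; apply/implyP.
  rewrite !inE => /andP [jB ju]; apply/negP => eij.
  by have [_ /eqP] := branch_exit iB eij jB; rewrite (negbTE ju).
Qed.

Lemma tail_in_branch u (Z : {set 'I_n}) : kY e Z = 1%N -> u \notin Z ->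
  exists2 c, e u c & {subset Z <= branch c u}.
Proof.
move=> /tail_branch [a [b [eab bdZ ZE]]] uZ.
have aZ : a \in Z by rewrite ZE branch_root.
have au : a != u by apply: contraNneq uZ => <-.
have [c euc aB] := branches_cover au.
exists c => // x xZ; apply/negPn/negP => xB.
pose U := Z :&: ~: branch c u.
have clU : forall y z, e y z -> y \in U -> z \in U.
  move=> y z eyz; rewrite !in_setI !in_setC => /andP [yZ yB]; apply/andP; split.
    apply/negPn/negP => zZ.
    have : (y, z) \in boundary Z by rewrite inE /= eyz yZ zZ.
    by rewrite bdZ inE => /eqP [ya _]; move: yB; rewrite ya aB.
  apply/negP => zB; have ezy : e z y by rewrite esym.
  by have [_ yu] := branch_exit zB ezy yB; move: uZ; rewrite -yu yZ.
have xU : x \in U by rewrite in_setI in_setC xZ xB.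
by have := closed_full clU xU u; rewrite in_setI (negbTE uZ).
Qed.

Lemma sum_tails (V : nmodType) (P : pred {set 'I_n}) (F : {set 'I_n} -> V) :
  \sum_(Z | (kY e Z == 1%N) && P Z) F Z =
  \sum_(p | e p.1 p.2 && P (branch p.1 p.2)) F (branch p.1 p.2).
Proof.
pose D := [set p : 'I_n * 'I_n | e p.1 p.2 && P (branch p.1 p.2)].
have injD : {in D &, injective (fun p => branch p.1 p.2)}.
  move=> [a b] [a' b']; rewrite !inE /= => /andP [eab _] /andP [ea'b' _] eqB.
  by apply: set1_inj; rewrite -(boundary_branch eab) -(boundary_branch ea'b') eqB.
rewrite [RHS](eq_bigl (fun p => p \in D)) => [|p]; last by rewrite inE.
rewrite -(big_imset _ injD); apply: eq_bigl => Z; apply/andP/imsetP.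
  case=> /eqP /tail_branch [a [b [eab _ ZE]]] PZ.
  by exists (a, b); rewrite // inE /= eab -ZE.
by case=> -[a b]; rewrite inE /= => /andP [eab PB] ->; rewrite kY_branch.
Qed.

Lemma count_branches u x :
  \sum_(c | e u c) ((x \in branch c u) : nat)%:Z = ((x != u) : nat)%:Z.
Proof.
have := sum_branches u (fun y => ((x == y) : nat)%:Z).
rewrite sum_delta (eq_bigr (fun c => ((x \in branch c u) : nat)%:Z)) => [|c _].
  case: eqVneq => [-> | _] /=; last by rewrite add0r => <-.
  by move=> H; apply: (@addrI _ 1); rewrite addr0 -H.
exact: (sum_delta (mem (branch c u))).
Qed.
End TreeBranches.

Section CanonicalWeights.
Variables (n : nat) (e : rel 'I_n) (gen : 'I_n -> nat).
Hypothesis esym : symmetric e.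
Hypothesis eirr : irreflexive e.
Hypothesis Hst : stable e gen.

Definition valence (v : 'I_n) : nat := #|[set j | e v j]|.

(* Handshake lemma: internal nodes of Y are counted twice, boundary ones once. *)
Lemma sum_valence (Y : {set 'I_n}) :
  (\sum_(v in Y) valence v = 2 * nedges_in e Y + kY e Y)%N.
Proof.
rewrite /nedges_in /kY.
rewrite (card_pairs (fun i j => [&& (val i < val j)%N, e i j, i \in Y & j \in Y])).
rewrite (card_pairs (fun i j => [&& e i j, i \in Y & j \notin Y])).
pose inner i j := [&& e i j, i \in Y & j \in Y].
have -> : (\sum_(v in Y) valence v = \sum_i \sum_j
    (((val i < val j)%N && inner i j) + ((val j < val i)%N && inner i j)
     + [&& e i j, i \in Y & j \notin Y] : nat))%N.
  rewrite big_mkcond /=; apply: eq_bigr => i _.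
  rewrite /valence -sum1_card big_mkcond /=.
  case iY: (i \in Y); last by rewrite big1 // => j _; rewrite /inner iY !andbF.
  apply: eq_bigr => j _; rewrite inE /inner iY.
  case eij: (e i j) => //=; case: ltngtP => //= [| | /val_inj ij].
  - by case: (j \in Y).
  - by case: (j \in Y).
  by move: eij; rewrite ij eirr.
under eq_bigr => i _ do rewrite !big_split /=.
rewrite !big_split /= mul2n -addnn; congr (_ + _ + _)%N.
rewrite exchange_big; apply: eq_bigr => i _; apply: eq_bigr => j _.
by rewrite /inner esym; case: (i \in Y); case: (j \in Y); rewrite ?andbF ?andbT.
Qed.

Definition weight (v : 'I_n) : nat := (2 * gen v + valence v - 2)%N.
Definition weightY (Y : {set 'I_n}) : nat := (\sum_(v in Y) weight v)%N.

(* Stability: a rational component has at least three nodes, so the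
   truncated subtraction in weight v is exact. *)
Lemma weight_cancel v : (weight v + 2 = 2 * gen v + valence v)%N.
Proof.
rewrite subnK //; case g0: (gen v) => [|g]; last by rewrite mulnS leq_addr.
by rewrite add0n; apply: leq_trans (Hst g0).
Qed.

Lemma degomega_weight (Y : {set 'I_n}) : degomega e gen Y = (weightY Y)%:Z.
Proof.
have wY : (weightY Y + 2 * #|Y| =
           2 * \sum_(v in Y) gen v + 2 * nedges_in e Y + kY e Y)%N.
  rewrite -addnA -sum_valence big_distrr /= -big_split mulnC -sum_nat_const.
  by rewrite -big_split; apply: eq_bigr => v _; apply: weight_cancel.
have genusYE : genusY e gen Y =
    (\sum_(v in Y) gen v)%N%:Z - #|Y|%:Z + (nedges_in e Y)%:Z + 1.
  by rewrite /genusY (big_morph Posz PoszD (erefl (Posz 0))).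
rewrite /degomega genusYE; lia.
Qed.

Lemma weightY_sub (Y Z : {set 'I_n}) : {subset Y <= Z} -> (weightY Y <= weightY Z)%N.
Proof.
move=> YZ; rewrite /weightY [X in (X <= _)%N]big_mkcond [X in (_ <= X)%N]big_mkcond.
by apply: leq_sum => v _; case vY: (v \in Y); rewrite ?(YZ v vY).
Qed.

Lemma weightYC (Y : {set 'I_n}) : (weightY (~: Y) + weightY Y = weightY setT)%N.
Proof.
rewrite /weightY [in RHS](bigID (mem Y)) /= addnC.
by congr (_ + _)%N; apply: eq_bigl => v; rewrite !inE.
Qed.

End CanonicalWeights.

Section PrincipalComponent.
Variables (n : nat) (e : rel 'I_n) (gen : 'I_n -> nat) (r : 'I_n).
Hypothesis esym : symmetric e.
Hypothesis eirr : irreflexive e.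
Hypothesis econn : connectedb e setT.
Hypothesis ebridge : forall a b, e a b -> ~~ connect (remove_edge e a b) a b.
Hypothesis Hst : stable e gen.
Hypothesis Hg : 2 <= genusC e gen.
Hypothesis Hpr : principal e gen r.

Local Notation w := (weightY e gen).
Local Notation wC := (weightY e gen setT).
Local Notation branch := (branch e).

Lemma kY_setT : kY e setT = 0%N.
Proof.
apply/eqP; rewrite cards_eq0; apply/eqP/setP => p.
by rewrite !inE andbF.
Qed.

Lemma genusC_weight : 2 * genusC e gen - 2 = wC%:Z.
Proof.
by have := degomega_weight esym eirr Hst setT; rewrite /degomega kY_setT addr0.
Qed.

Lemma genus_tail (Z : {set 'I_n}) : kY e Z = 1%N -> 2 * genusY e gen Z - 1 = (w Z)%:Z.
Proof.
by move=> kZ; have := degomega_weight esym eirr Hst Z; rewrite /degomega kZ; lia.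
Qed.

Lemma weightC_ge2 : (2 <= wC)%N.
Proof. by have := genusC_weight; lia. Qed.

Lemma weight_branch_r c : e r c -> (2 * w (branch c r) <= wC)%N.
Proof.
move=> erc; have ecr : e c r by rewrite esym.
have gB : 2 * genusY e gen (branch c r) <= genusC e gen.
  have compB := branch_component esym ebridge erc.
  by case: Hpr => [/(_ _ compB) /ltW | [_ /(_ _ compB)]].
have := genus_tail (kY_branch esym ebridge ecr).
by have := genusC_weight; lia.
Qed.

Lemma weight_tail (Z : {set 'I_n}) : kY e Z = 1%N -> r \notin Z -> (2 * w Z <= wC)%N.
Proof.
move=> kZ rZ; have [c erc ZB] := tail_in_branch esym econn ebridge kZ rZ.
by apply: leq_trans (weight_branch_r erc); rewrite leq_mul2l weightY_sub.
Qed.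

Lemma small_tailE (Z : {set 'I_n}) :
  small_tail e gen r Z = (kY e Z == 1%N) && (r \notin Z).
Proof.
rewrite /small_tail /tail; case: eqP => //= kZ.
have gZ := genus_tail kZ; have gC := genusC_weight.
case rZ: (r \in Z) => /=; last by have := weight_tail kZ (negbT rZ); lia.
have kZc : kY e (~: Z) = 1%N by rewrite kY_compl.
have := weight_tail kZc; rewrite in_setC rZ => /(_ isT).
by have := weightYC e gen Z; rewrite andbF orbF; lia.
Qed.

(* The share of the canonical degree carried by Y; since deg omega_C = w_C,
   for a multidegree of total degree 1 the semistability condition compares
   d_Y with share Y. *)
Definition share (Y : {set 'I_n}) : rat := (w Y)%:R / wC%:R.

Lemma weightC_gt0 : (0 : rat) < wC%:R.
Proof. by rewrite ltr0n; apply: leq_trans weightC_ge2. Qed.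

Lemma share_ge0 Y : 0 <= share Y.
Proof. by rewrite divr_ge0 ?ler0n. Qed.

Lemma share_le1 Y : share Y <= 1.
Proof.
rewrite ler_pdivrMr ?weightC_gt0 // mul1r ler_nat.
by apply: weightY_sub => v; rewrite in_setT.
Qed.

Lemma shareC Y : share (~: Y) = 1 - share Y.
Proof.
rewrite /share.
have -> : (w (~: Y))%:R = wC%:R - (w Y)%:R :> rat.
  by rewrite -(weightYC e gen Y) natrD addrK.
by rewrite mulrBl divff // lt0r_neq0 // weightC_gt0.
Qed.

Lemma share_tail (Z : {set 'I_n}) : kY e Z = 1%N -> r \notin Z -> share Z <= 1 / 2.
Proof.
move=> kZ rZ; rewrite /share ler_pdivrMr ?weightC_gt0 //.
by have := weight_tail kZ rZ; rewrite -(ler_nat rat) natrM; lra.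
Qed.

Lemma share_le_kY (Y : {set 'I_n}) : Y != set0 -> Y != setT -> r \notin Y ->
  share Y <= (kY e Y)%:R / 2.
Proof.
move=> Y0 YT rY; have := kY_pos econn Y0 YT.
case: (ltngtP (kY e Y) 1) => [//| kY2 _ | kY1 _].
  apply: le_trans (share_le1 Y) _.
  by rewrite ler_pdivlMr // mul1r ler_nat.
by rewrite kY1; apply: share_tail.
Qed.

Lemma deviationE (d : multideg n) (Y : {set 'I_n}) : totdeg d = 1 ->
  (degY d Y)%:~R - slope e gen d * (degomega e gen Y)%:~R = (degY d Y)%:~R - share Y :> rat.
Proof.
move=> d1; rewrite /slope d1 degomega_weight // genusC_weight.
by rewrite /share mul1r mulrC.
Qed.

Lemma degY_e1 (Y : {set 'I_n}) : degY (e1 r) Y = (r \in Y : nat)%:Z.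
Proof.
rewrite /degY /e1 (eq_bigr (fun k => ((k == r) : nat)%:Z)) => [|k _]; last by case: eqP.
by under eq_bigr do rewrite eq_sym; rewrite sum_delta.
Qed.

Lemma totdeg_e1 : totdeg (e1 r) = 1.
Proof. by rewrite /totdeg degY_e1 in_setT. Qed.

(* e1 is semistable: its deviation is share (~: Y) or - share Y. *)
Lemma e1_semistable : semistable e gen (e1 r).
Proof.
move=> Y Y0 YT; rewrite deviationE ?totdeg_e1 // degY_e1.
case rY: (r \in Y) => /=.
  have Yc0 : ~: Y != set0 by apply: contraNneq YT => Yc0; rewrite -[Y]setCK Yc0 setC0.
  have YcT : ~: Y != setT by apply: contraTneq rY => YcT; rewrite -[Y]setCK YcT setCT inE.
  rewrite -shareC ger0_norm ?share_ge0 // -(kY_compl esym Y).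
  by apply: share_le_kY; rewrite // in_setC rY.
by rewrite sub0r normrN ger0_norm ?share_ge0 //; apply: share_le_kY; rewrite ?rY.
Qed.

(* On Y containing r the deviation share (~: Y) is nonnegative, a fortiori
   strictly above - k_Y / 2. *)
Lemma e1_quasistable : quasistable e gen r (e1 r).
Proof.
split; first exact: e1_semistable.
move=> Y rY YT; rewrite deviationE ?totdeg_e1 // degY_e1 rY -shareC.
by apply: lt_le_trans (share_ge0 _); rewrite oppr_lt0 divr_gt0 // ltr0n kY_pos //;
   apply/set0Pn; exists r.
Qed.

Lemma totdegE (d : multideg n) : totdeg d = \sum_x d x.
Proof. by apply: eq_bigl => x; rewrite in_setT. Qed.

Lemma degYC (d : multideg n) (Y : {set 'I_n}) : degY d (~: Y) = totdeg d - degY d Y.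
Proof.
rewrite totdegE (bigID (mem Y)) /= addrC addrK.
by apply: eq_bigl => x; rewrite inE.
Qed.

(* A quasistable d of total degree 1 has degree 0 on each tail Z avoiding r:
   semistability on Z and strict quasistability on its complement pin d_Z
   into the open interval (-1, 1). *)
Lemma quasistable_tail (d : multideg n) (Z : {set 'I_n}) :
  totdeg d = 1 -> quasistable e gen r d -> kY e Z = 1%N -> r \notin Z -> degY d Z = 0.
Proof.
move=> d1 [dss dqs] kZ rZ.
have [a [b [_ _ ZE]]] := tail_branch esym econn ebridge kZ.
have Z0 : Z != set0 by apply/set0Pn; exists a; rewrite ZE branch_root.
have ZT : Z != setT by apply: contraNneq rZ => ->; rewrite in_setT.
have rZc : r \in ~: Z by rewrite in_setC.
have ZcT : ~: Z != setT by apply: contraNneq Z0 => Zc; rewrite -[Z]setCK Zc setCT.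
have := dss Z Z0 ZT; rewrite deviationE // kZ ler_norml => /andP [lo _].
have := dqs _ rZc ZcT; rewrite deviationE // kY_compl // kZ degYC d1 shareC intrB.
have := share_tail kZ rZ; have := share_ge0 Z => ? ? up.
have : degY d Z < 1 by rewrite -(ltr_int rat); lra.
have : -1 < degY d Z by rewrite -(ltr_int rat); lra.
lia.
Qed.

(* Hence d vanishes off r: at u != r, the branches at u avoiding r have
   degree 0 and the one containing r has degree 1, the complement of a tail
   avoiding r. *)
Lemma quasistable_unique (d : multideg n) :
  totdeg d = 1 -> quasistable e gen r d -> d =1 e1 r.
Proof.
move=> d1 dqs.
have d0 u : u != r -> d u = 0.
  move=> ur; have ru : r != u by rewrite eq_sym.
  have [p eup rB] := branches_cover esym econn ebridge ru.
  have epu : e p u by rewrite esym.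
  have Bp1 : degY d (branch p u) = 1.
    rewrite -(branchC esym econn ebridge eup) degYC d1 quasistable_tail ?subr0 //.
      exact: (kY_branch esym ebridge).
    by rewrite -in_setC branchC.
  have Bc0 c : e u c && (c != p) -> degY d (branch c u) = 0.
    case/andP=> euc cp; have ecu : e c u by rewrite esym.
    apply: quasistable_tail => //; first exact: (kY_branch esym ebridge).
    by apply: (branches_disjoint esym eirr econn ebridge epu) rB; rewrite // eq_sym.
  have := sum_branches esym eirr econn ebridge u d.
  rewrite -totdegE d1 (bigD1 p) //= -/(degY d (branch p u)) Bp1.
  rewrite big1 => [|c /Bc0 //]; rewrite addr0.
  lia.
move=> k; rewrite /e1; case: eqVneq => [-> | kr]; last exact: d0.
by rewrite -d1 totdegE (bigD1 r) //= big1 ?addr0.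
Qed.

Lemma mdeg_OZ_branch a b k : e a b ->
  mdeg_OZ e (branch a b) k = ((k == b) : nat)%:Z - ((k == a) : nat)%:Z.
Proof.
move=> eab; rewrite /mdeg_OZ; have bB := branch_notin ebridge eab.
case: ifPn => kB.
  have kb : (k == b) = false by apply: contraTF kB => /eqP ->.
  rewrite kb sub0r (@card_le1 _ _ b) => [|j]; last first.
    by rewrite inE => /andP [ekj jB]; have [_ ->] := branch_exit esym ebridge kB ekj jB.
  rewrite inE bB andbT; case: eqVneq => [-> | ka]; first by rewrite eab.
  by case ekb: (e k b) => //; have [/eqP] := branch_exit esym ebridge kB ekb bB;
     rewrite (negbTE ka).
have -> : (k == a) = false by apply: contraNF kB => /eqP ->; apply: branch_root.
rewrite subr0 (@card_le1 _ _ a) => [|j]; last first.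
  rewrite inE => /andP [ekj jB]; have ejk : e j k by rewrite esym.
  by have [-> _] := branch_exit esym ebridge jB ejk kB.
rewrite inE branch_root andbT; case: eqVneq => [-> | kb]; first by rewrite esym eab.
case eka: (e k a) => //; have eak : e a k by rewrite esym.
by have [_ /eqP] := branch_exit esym ebridge (branch_root e a b) eak kB; rewrite (negbTE kb).
Qed.

(* Indexing the small tails
   by their nodes, the sum of the O_C(Z) over small tails containing i has
   degree #{c ~ k : i in B_c, r notin B_c} - #{c ~ k : r in B_c, i notin B_c}
   at k, where B_c is the branch of c at k; this is
   #{c : i in B_c} - #{c : r in B_c} = [i != k] - [r != k]. *)
Lemma alpha_smooth_e1 i : mdeg_alpha_smooth e gen r i =1 e1 r.
Proof.
move=> k; rewrite /mdeg_alpha_smooth.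
pose P (Z : {set 'I_n}) := (r \notin Z) && (i \in Z).
rewrite (eq_bigl (fun Z => (kY e Z == 1%N) && P Z)) => [|Z]; last first.
  by rewrite small_tailE andbA.
rewrite sum_tails //.
rewrite (eq_bigr (fun p => ((k == p.2) : nat)%:Z - ((k == p.1) : nat)%:Z)); last first.
  by move=> p /andP [ep _]; apply: mdeg_OZ_branch.
rewrite (sum_endpoints (fun a b => e a b && P (branch a b))) -sumrB.
rewrite (eq_bigr (fun c => if e k c then ((i \in branch c k) : nat)%:Z
                             - ((r \in branch c k) : nat)%:Z else 0)); last first.
  move=> c _; rewrite [e c k]esym; case: ifPn => /= ekc //.
  rewrite -(branchC esym econn ebridge ekc) /P !in_setC.
  by case: (i \in _); case: (r \in _).
rewrite -big_mkcond sumrB !count_branches // /e1 [i == k]eq_sym [r == k]eq_sym.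
by case: (k == i); case: (k == r).
Qed.

(* At a node {q,o} whose small tail Z0 contains q, alpha^1_C agrees with its
   value at a smooth point of q: no small tail contains o but not q, since
   such a tail would be the complement of Z0, which contains r. *)
Lemma alpha_node_smooth q o (Z0 : {set 'I_n}) : e q o -> small_tail e gen r Z0 ->
  q \in Z0 -> o \notin Z0 -> mdeg_alpha_node e gen r q o Z0 =1 mdeg_alpha_smooth e gen r q.
Proof.
move=> eqo sZ0 qZ0 oZ0 k; rewrite /mdeg_alpha_node /mdeg_alpha_smooth.
have eoq : e o q by rewrite esym.
congr (_ + _).
  case: (eqVneq k q) => [-> | kq]; first by rewrite qZ0.
  by case: (eqVneq k o) => [-> | _]; rewrite ?(negbTE oZ0) ?andbF.
apply: eq_bigl => Z; case sZ: (small_tail e gen r Z) => //=.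
case qZ: (q \in Z) => //=; apply/negP => oZ.
move: sZ sZ0; rewrite !small_tailE => /andP [/eqP kZ rZ] /andP [/eqP kZ0 rZ0].
have Z0E := tail_at_node esym econn ebridge kZ0 qZ0 eqo oZ0.
have ZE := tail_at_node esym econn ebridge kZ oZ eoq (negbT qZ).
by move: rZ; rewrite ZE -(branchC esym econn ebridge eqo) -Z0E in_setC rZ0.
Qed.

Lemma alpha_node_e1 a b (Z0 : {set 'I_n}) : e a b -> small_tail e gen r Z0 ->
  (a \in Z0) != (b \in Z0) -> mdeg_alpha_node e gen r a b Z0 =1 e1 r.
Proof.
move=> eab sZ0; have eba : e b a by rewrite esym.
case aZ: (a \in Z0); case bZ: (b \in Z0) => //= _ k.
  by rewrite alpha_node_smooth ?aZ ?bZ // alpha_smooth_e1.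
have -> : mdeg_alpha_node e gen r a b Z0 k = mdeg_alpha_node e gen r b a Z0 k.
  by rewrite /mdeg_alpha_node orbC; congr (_ + _); apply: eq_bigl => Z; rewrite orbC.
by rewrite alpha_node_smooth ?aZ ?bZ // alpha_smooth_e1.
Qed.
End PrincipalComponent.

Theorem mainTheorem2 (n : nat) (e : rel 'I_n) (gen : 'I_n -> nat)
  (Hsimple : simple_graph e) (Hct : compact_type e) (Hst : stable e gen)
  (Hg : 2 <= genusC e gen) (Xpr : 'I_n) (Hpr : principal e gen Xpr) :
  (* (i) *)
  (totdeg (e1 Xpr) = 1 /\ quasistable e gen Xpr (e1 Xpr) /\
   forall d : multideg n, totdeg d = 1 -> quasistable e gen Xpr d -> d =1 e1 Xpr)
  /\
  (* (ii) *)
  ((forall i : 'I_n, mdeg_alpha_smooth e gen Xpr i =1 e1 Xpr) /\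
   (forall (a b : 'I_n) (Z0 : {set 'I_n}),
      e a b -> small_tail e gen Xpr Z0 -> (a \in Z0) != (b \in Z0) ->
      mdeg_alpha_node e gen Xpr a b Z0 =1 e1 Xpr)).
Proof.
case: Hsimple => esym eirr; case: Hct => econn ebridge.
split; [split; [|split] | split].
- exact: totdeg_e1.
- exact: e1_quasistable.
- exact: quasistable_unique.
- exact: alpha_smooth_e1.
- exact: alpha_node_e1.
Qed.
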